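(* Let $\triangle ABC$ be an acute triangle circumscribed about an ellipse with semi-axes $a>b>0$ whose center coincides with the circumcenter of $\triangle ABC$. Then the inradius of the orthic triangle of $\triangle ABC$ equals $\dfrac{ab}{a+b}$.
   Context: A triangle is circumscribed about a conic if each of its three sidelines is tangent to the conic. The orthic triangle of $\triangle ABC$ is the triangle $H_AH_BH_C$ whose vertices are the feet of the perpendiculars from $A,B,C$ to the lines $BC,CA,AB$, respectively. *)

From mathcomp Require Import all_boot all_order all_algebra.
Set Implicit Arguments. Unset Strict Implicit. Unset Printing Implicit Defensive.
Import Order.TTheory GRing.Theory Num.Theory.
Local Open Scope ring_scope.

Section Plane.
Variable R : realFieldType.
Definition pt := (R * R)%type.

Definition vsub (P Q : pt) : pt := (P.1 - Q.1, P.2 - Q.2).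
Definition vadd (P Q : pt) : pt := (P.1 + Q.1, P.2 + Q.2).
Definition vscale (t : R) (P : pt) : pt := (t * P.1, t * P.2).
Definition dotp (u v : pt) : R := u.1 * v.1 + u.2 * v.2.
Definition crossp (u v : pt) : R := u.1 * v.2 - u.2 * v.1.
Definition sqdist (P Q : pt) : R := dotp (vsub P Q) (vsub P Q).

Definition on_line_at (P Q : pt) (t : R) : pt := vadd P (vscale t (vsub Q P)).

Definition acute (A B C : pt) : Prop :=
  0 < dotp (vsub B A) (vsub C A) /\ 0 < dotp (vsub A B) (vsub C B) /\
  0 < dotp (vsub A C) (vsub B C).

Definition circumcenter_of (O A B C : pt) : Prop :=
  sqdist O A = sqdist O B /\ sqdist O B = sqdist O C.

(* ellipse with center O, first axis direction (c,s) (unit vector),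
   semi-axes a (along (c,s)) and b (along (-s,c)) *)
Definition on_ellipse (O : pt) (c s a b : R) (X : pt) : Prop :=
  let d := vsub X O in
  (dotp d (c, s)) ^+ 2 / a ^+ 2 + (dotp d (- s, c)) ^+ 2 / b ^+ 2 = 1.

Definition tangent_line (O : pt) (c s a b : R) (P Q : pt) : Prop :=
  P <> Q /\
  (exists t, on_ellipse O c s a b (on_line_at P Q t)) /\
  (forall t1 t2, on_ellipse O c s a b (on_line_at P Q t1) ->
                 on_ellipse O c s a b (on_line_at P Q t2) -> t1 = t2).

Definition foot (X P Q : pt) : pt :=
  on_line_at P Q (dotp (vsub X P) (vsub Q P) / dotp (vsub Q P) (vsub Q P)).

(* squared distance from X to line PQ is r^2 *)
Definition dist_line_eq (X P Q : pt) (r : R) : Prop :=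
  (crossp (vsub Q P) (vsub X P)) ^+ 2 = r ^+ 2 * sqdist Q P.

Definition strictly_inside (X P Q S : pt) : Prop :=
  exists u v w : R, 0 < u /\ 0 < v /\ 0 < w /\ u + v + w = 1 /\
    X = vadd (vscale u P) (vadd (vscale v Q) (vscale w S)).

Definition is_inradius (r : R) (P Q S : pt) : Prop :=
  0 < r /\ exists I, strictly_inside I P Q S /\
    dist_line_eq I P Q r /\ dist_line_eq I Q S r /\ dist_line_eq I S P r.
End Plane.

(* The tangency of the line through P with direction d to the ellipse is the equation
   cross(P - O, d)^2 = K(d) for a quadratic form K with trace a^2 + b^2 and
   determinant a^2 b^2 (the dual conic).  On the three sides of the triangle the left
   hand sides are also the values of a quadratic form N built from the vertices and the
   circumcenter O alone; two binary quadratic forms that agree on three pairwise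
   independent vectors coincide, so K = N.  The invariants of N give
   a^2 + b^2 = (R^2 + OH^2) / 2 and a^2 b^2 = rho^2 with rho = (R^2 - OH^2) / 4 > 0
   for an acute triangle, hence a b = rho and (a + b)^2 = R^2.  Finally the
   orthocenter H is the incenter of the orthic triangle, at distance rho / R from its
   sides. *)

From mathcomp Require Import all_boot all_order all_algebra ring lra.
Set Implicit Arguments. Unset Strict Implicit. Unset Printing Implicit Defensive.
Import Order.TTheory GRing.Theory Num.Theory.
Local Open Scope ring_scope.

Section Geometry.
Variable R : realFieldType.
Implicit Types (m n : R * R * R) (d x y z A B C O P Q S T X Y : pt R).

Lemma vsub_self X : vsub X X = (0, 0).
Proof. by rewrite /vsub !subrr. Qed.

Lemma vsub_origin X : vsub X (0, 0) = X.
Proof. by case: X => ? ?; rewrite /vsub !subr0. Qed.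

Lemma dotp_self_ge0 x : 0 <= dotp x x.
Proof. by rewrite /dotp addr_ge0 // -expr2 sqr_ge0. Qed.

Lemma lagrange_identity x y : crossp x y ^+ 2 + dotp x y ^+ 2 = dotp x x * dotp y y.
Proof. by rewrite /crossp /dotp; ring. Qed.

Lemma dotp_self_neq0 x y : crossp x y != 0 -> dotp x x != 0.
Proof.
move=> hk; apply: contra hk => /eqP hx.
have := lagrange_identity x y; rewrite hx mul0r => /eqP; rewrite paddr_eq0 ?sqr_ge0 //.
by rewrite sqrf_eq0 => /andP[].
Qed.

Lemma sqdist_eq0 X Y : sqdist X Y = 0 -> X = Y.
Proof.
case: X Y => [x1 x2] [y1 y2]; rewrite /sqdist /dotp /vsub /= -!expr2 => /eqP.
by rewrite paddr_eq0 ?sqr_ge0 // !sqrf_eq0 !subr_eq0 => /andP[/eqP -> /eqP ->].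
Qed.

Lemma crossp_rotate A B C : crossp (vsub C B) (vsub A B) = crossp (vsub B A) (vsub C A).
Proof. by rewrite /crossp /vsub /=; ring. Qed.

Lemma sqdist_sides_gt0 A B C : crossp (vsub B A) (vsub C A) != 0 ->
  [/\ 0 < sqdist B A, 0 < sqdist C B & 0 < sqdist A C].
Proof.
have gt0 x y : crossp x y != 0 -> 0 < dotp x x.
  by move=> hk; rewrite lt0r dotp_self_ge0 andbT (dotp_self_neq0 hk).
move=> hk; split; first exact: gt0 hk.
  by apply: (gt0 _ (vsub A B)); rewrite crossp_rotate.
by apply: (gt0 _ (vsub B C)); rewrite 2!crossp_rotate.
Qed.

Lemma acute_cross_neq0 A B C : acute A B C -> crossp (vsub B A) (vsub C A) != 0.
Proof.
move=> [hA [hB hC]]; rewrite -sqrf_eq0 gt_eqF //.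
have -> : crossp (vsub B A) (vsub C A) ^+ 2 =
    dotp (vsub B A) (vsub C A) * dotp (vsub A B) (vsub C B)
  + dotp (vsub A B) (vsub C B) * dotp (vsub A C) (vsub B C)
  + dotp (vsub A C) (vsub B C) * dotp (vsub B A) (vsub C A).
  by rewrite /crossp /dotp /vsub /=; ring.
by rewrite !addr_gt0 ?mulr_gt0.
Qed.

(** * Binary quadratic forms *)

Definition qform m d : R := m.1.1 * d.1 ^+ 2 + 2 * m.1.2 * d.1 * d.2 + m.2 * d.2 ^+ 2.
Definition qtrace m : R := m.1.1 + m.2.
Definition qdet m : R := m.1.1 * m.2 - m.1.2 ^+ 2.

Lemma qform_eq_triangle m n x y z :
  vadd x (vadd y z) = (0, 0) -> crossp x y != 0 ->
  qform m x = qform n x -> qform m y = qform n y -> qform m z = qform n z -> m = n.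
Proof.
case: m => [[m11 m12] m22]; case: n => [[n11 n12] n22].
case: x => x1 x2; case: y => y1 y2; case: z => z1 z2.
rewrite /vadd /crossp /qform /= => -[hz1 hz2] hk.
have -> : z1 = - (x1 + y1) by lra.
have -> : z2 = - (x2 + y2) by lra.
move=> /eqP; rewrite -subr_eq0; set Dx := (X in X == 0) => /eqP hx.
move=> /eqP; rewrite -subr_eq0; set Dy := (X in X == 0) => /eqP hy.
move=> /eqP; rewrite -subr_eq0; set Dz := (X in X == 0) => /eqP hz.
have hk2 : (x1 * y2 - x2 * y1) ^+ 2 != 0 by rewrite expf_neq0.
(* Cramer's rule for the difference form, known at [x], [y] and [z = - (x + y)] *)
have e11 : (x1 * y2 - x2 * y1) ^+ 2 * (m11 - n11) = 0.
  transitivity (y2 ^+ 2 * Dx - x2 * y2 * (Dz - Dx - Dy) + x2 ^+ 2 * Dy).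
    by rewrite /Dx /Dy /Dz; ring.
  by rewrite hx hy hz; ring.
have e22 : (x1 * y2 - x2 * y1) ^+ 2 * (m22 - n22) = 0.
  transitivity (y1 ^+ 2 * Dx - x1 * y1 * (Dz - Dx - Dy) + x1 ^+ 2 * Dy).
    by rewrite /Dx /Dy /Dz; ring.
  by rewrite hx hy hz; ring.
have e12 : (x1 * y2 - x2 * y1) ^+ 2 * (m12 - n12) = 0.
  transitivity (- y1 * y2 * Dx + (x1 * y2 + x2 * y1) / 2 * (Dz - Dx - Dy) - x1 * x2 * Dy).
    by rewrite /Dx /Dy /Dz; field.
  by rewrite hx hy hz; ring.
have cancel t : (x1 * y2 - x2 * y1) ^+ 2 * t = 0 -> t = 0.
  by move/eqP; rewrite mulf_eq0 (negbTE hk2) => /eqP.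
by rewrite (subr0_eq (cancel _ e11)) (subr0_eq (cancel _ e12)) (subr0_eq (cancel _ e22)).
Qed.

Lemma unique_root_discriminant (al be ga : R) :
  al != 0 -> (exists t, al * t ^+ 2 + be * t + ga = 0) ->
  (forall t1 t2, al * t1 ^+ 2 + be * t1 + ga = 0 -> al * t2 ^+ 2 + be * t2 + ga = 0 ->
     t1 = t2) ->
  be ^+ 2 = 4 * al * ga.
Proof.
move=> hal [t0 h0] huniq.
(* by Vieta, [- be / al - t0] is a root as well *)
have h1 : al * (- be / al - t0) ^+ 2 + be * (- be / al - t0) + ga = 0.
  by rewrite -h0; field.
have e : t0 = - be / al - t0 := huniq _ _ h0 h1.
have ht : 2 * al * t0 + be = 0.
  transitivity (al * (t0 - (- be / al - t0))); first by field.
  by rewrite -e subrr mulr0.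
apply/eqP; rewrite -subr_eq0; apply/eqP.
transitivity ((2 * al * t0 + be) ^+ 2 - 4 * al * (al * t0 ^+ 2 + be * t0 + ga)); first ring.
by rewrite ht h0; ring.
Qed.

(** * Tangents to an ellipse *)

Definition ellipse_form (c s a b : R) : R * R * R :=
  (b ^+ 2 * c ^+ 2 + a ^+ 2 * s ^+ 2, (b ^+ 2 - a ^+ 2) * c * s,
   b ^+ 2 * s ^+ 2 + a ^+ 2 * c ^+ 2).

Lemma qform_ellipse_form c s a b d :
  qform (ellipse_form c s a b) d =
  b ^+ 2 * dotp d (c, s) ^+ 2 + a ^+ 2 * dotp d (- s, c) ^+ 2.
Proof. by rewrite /qform /dotp /=; ring. Qed.

Lemma qtrace_ellipse_form (c s a b : R) :
  c ^+ 2 + s ^+ 2 = 1 -> qtrace (ellipse_form c s a b) = a ^+ 2 + b ^+ 2.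
Proof. by move=> hcs; rewrite -[RHS]mulr1 -hcs /qtrace /=; ring. Qed.

Lemma qdet_ellipse_form (c s a b : R) :
  c ^+ 2 + s ^+ 2 = 1 -> qdet (ellipse_form c s a b) = a ^+ 2 * b ^+ 2.
Proof. by move=> hcs; rewrite -[RHS]mulr1 -(expr1n _ 2) -hcs /qdet /=; ring. Qed.

Lemma on_ellipse_line O P Q c s a b t : a != 0 -> b != 0 ->
  let u := dotp (vsub P O) (c, s) in let v := dotp (vsub P O) (- s, c) in
  let du := dotp (vsub Q P) (c, s) in let dv := dotp (vsub Q P) (- s, c) in
  on_ellipse O c s a b (on_line_at P Q t) <->
  (b ^+ 2 * du ^+ 2 + a ^+ 2 * dv ^+ 2) * t ^+ 2 + 2 * (b ^+ 2 * u * du + a ^+ 2 * v * dv) * t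
  + (b ^+ 2 * u ^+ 2 + a ^+ 2 * v ^+ 2 - a ^+ 2 * b ^+ 2) = 0.
Proof.
move=> ha hb u v du dv; rewrite /on_ellipse.
set e := (X in _ <-> X = 0).
have -> : dotp (vsub (on_line_at P Q t) O) (c, s) ^+ 2 / a ^+ 2
          + dotp (vsub (on_line_at P Q t) O) (- s, c) ^+ 2 / b ^+ 2
          = 1 + e / (a ^+ 2 * b ^+ 2).
  by rewrite /e /u /v /du /dv /on_line_at /dotp /vsub /vadd /vscale /=; field; rewrite ha hb.
split=> [|->]; last by rewrite mul0r addr0.
rewrite -[X in _ = X](addr0 1) => /addrI /eqP.
by rewrite mulf_eq0 => /orP[/eqP //|]; rewrite invr_eq0 mulf_eq0 !expf_eq0 (negbTE ha) (negbTE hb).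
Qed.

Lemma tangent_line_cross O P Q c s a b :
  c ^+ 2 + s ^+ 2 = 1 -> 0 < a -> 0 < b -> tangent_line O c s a b P Q ->
  crossp (vsub P O) (vsub Q P) ^+ 2 = qform (ellipse_form c s a b) (vsub Q P).
Proof.
move=> hcs ha hb [hPQ [[t0 ht0] uniq]].
have ha0 : a != 0 by rewrite gt_eqF.
have hb0 : b != 0 by rewrite gt_eqF.
have line t := on_ellipse_line O P Q c s t ha0 hb0.
set u := dotp (vsub P O) (c, s) in line; set v := dotp (vsub P O) (- s, c) in line.
set du := dotp (vsub Q P) (c, s) in line; set dv := dotp (vsub Q P) (- s, c) in line.
have hd : du ^+ 2 + dv ^+ 2 != 0.
  have -> : du ^+ 2 + dv ^+ 2 = (vsub Q P).1 ^+ 2 + (vsub Q P).2 ^+ 2.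
    by rewrite -[RHS]mulr1 -hcs /du /dv /dotp /=; ring.
  apply/negP; rewrite paddr_eq0 ?sqr_ge0 // !sqrf_eq0; apply: contra_not hPQ.
  case: P Q {u v du dv line ht0 uniq} => [? ?] [? ?].
  by rewrite /vsub /= !subr_eq0 => /andP[/eqP -> /eqP ->].
have hal : b ^+ 2 * du ^+ 2 + a ^+ 2 * dv ^+ 2 != 0.
  apply: contra hd; rewrite -!exprMn paddr_eq0 ?sqr_ge0 // !sqrf_eq0 !mulf_eq0.
  by rewrite (negbTE ha0) (negbTE hb0) => /andP[/eqP -> /eqP ->]; rewrite expr0n addr0.
have disc := unique_root_discriminant hal (ex_intro _ t0 ((line t0).1 ht0))
  (fun t1 t2 h1 h2 => uniq t1 t2 ((line t1).2 h1) ((line t2).2 h2)).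
have -> : crossp (vsub P O) (vsub Q P) = u * dv - v * du.
  by rewrite -[LHS]mulr1 -hcs /u /v /du /dv /crossp /dotp /=; ring.
rewrite qform_ellipse_form -/du -/dv.
have h4ab : 4 * a ^+ 2 * b ^+ 2 != 0 by rewrite !mulf_neq0 ?expf_neq0 ?pnatr_eq0.
have key :
  4 * a ^+ 2 * b ^+ 2 * ((u * dv - v * du) ^+ 2 - (b ^+ 2 * du ^+ 2 + a ^+ 2 * dv ^+ 2))
  = 4 * (b ^+ 2 * du ^+ 2 + a ^+ 2 * dv ^+ 2) * (b ^+ 2 * u ^+ 2 + a ^+ 2 * v ^+ 2 - a ^+ 2 * b ^+ 2)
    - (2 * (b ^+ 2 * u * du + a ^+ 2 * v * dv)) ^+ 2 by ring.
move: key; rewrite disc subrr => /eqP; rewrite mulf_eq0 (negbTE h4ab) subr_eq0.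
by move=> /eqP.
Qed.

(* Sylvester's formula: for the circumcenter [O], this is the orthocenter. *)
Definition orthocenter (O A B C : pt R) : pt R := vsub (vadd A (vadd B C)) (vscale 2 O).

(* [2 R^2 cos A cos B cos C], the circumradius times the inradius of the orthic triangle *)
Definition orthic_rho (O A B C : pt R) : R :=
  (sqdist O A - sqdist (orthocenter O A B C) O) / 4.

(* The triangle's own candidate for the dual conic of an inscribed ellipse centred
   at [O]: its value on each side is [|side|^2 dist(O, side)^2]. *)
Definition circum_form (O A B C : pt R) : R * R * R :=
  let x := vsub A O in let y := vsub B O in let z := vsub C O in
  let h := vsub (orthocenter O A B C) O in
  ((x.2 ^+ 2 + y.2 ^+ 2 + z.2 ^+ 2 + h.1 ^+ 2 - sqdist O A) / 2,
   (h.1 * h.2 - (x.1 * x.2 + y.1 * y.2 + z.1 * z.2)) / 2,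
   (x.1 ^+ 2 + y.1 ^+ 2 + z.1 ^+ 2 + h.2 ^+ 2 - sqdist O A) / 2).

Lemma circumcenter_of_rotate O A B C : circumcenter_of O A B C -> circumcenter_of O B C A.
Proof. by move=> [hAB hBC]; split; [exact: hBC | rewrite hAB hBC]. Qed.

Lemma orthocenter_rotate O A B C : orthocenter O B C A = orthocenter O A B C.
Proof. by rewrite /orthocenter /vsub /vadd /=; congr (_, _); ring. Qed.

Lemma orthic_rho_rotate O A B C :
  circumcenter_of O A B C -> orthic_rho O B C A = orthic_rho O A B C.
Proof. by move=> [hAB _]; rewrite /orthic_rho orthocenter_rotate hAB. Qed.

Lemma circumradius_neq0 O A B C :
  circumcenter_of O A B C -> crossp (vsub B A) (vsub C A) != 0 -> sqdist O A != 0.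
Proof.
move=> [hAB _]; apply: contraNneq => hA.
have hB : sqdist O B = 0 by rewrite -hAB.
by rewrite -(sqdist_eq0 hA) -(sqdist_eq0 hB) vsub_self /crossp /= !mul0r subrr.
Qed.

Lemma qform_circum_form O A B C d :
  2 * qform (circum_form O A B C) d =
  crossp (vsub A O) d ^+ 2 + crossp (vsub B O) d ^+ 2 + crossp (vsub C O) d ^+ 2
  + dotp (vsub (orthocenter O A B C) O) d ^+ 2 - sqdist O A * dotp d d.
Proof.
rewrite /qform /circum_form /orthocenter /sqdist /crossp /dotp /vsub /vadd /vscale /=.
by field.
Qed.

Lemma circum_form_side O A B C : circumcenter_of O A B C ->
  crossp (vsub B O) (vsub C B) ^+ 2 = qform (circum_form O A B C) (vsub C B).
Proof.
move=> [_ hBC]; apply: (@mulfI _ 2); first by rewrite pnatr_eq0.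
rewrite qform_circum_form; apply/eqP; rewrite -subr_eq0; apply/eqP.
(* [B] and [C] contribute the left hand side; the rest is Lagrange's identity at [A] *)
have -> : 2 * crossp (vsub B O) (vsub C B) ^+ 2 -
    (crossp (vsub A O) (vsub C B) ^+ 2 + crossp (vsub B O) (vsub C B) ^+ 2
     + crossp (vsub C O) (vsub C B) ^+ 2 + dotp (vsub (orthocenter O A B C) O) (vsub C B) ^+ 2
     - sqdist O A * dotp (vsub C B) (vsub C B))
  = (sqdist O B - sqdist O C) * (2 * dotp (vsub A O) (vsub C B) + sqdist O C - sqdist O B).
  by rewrite /orthocenter /sqdist /crossp /dotp /vsub /vadd /vscale /=; ring.
by rewrite hBC subrr mul0r.
Qed.

Lemma circum_form_rotate O A B C : circumcenter_of O A B C ->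
  circum_form O B C A = circum_form O A B C.
Proof.
move=> [hAB _]; rewrite /circum_form -hAB /orthocenter /sqdist /dotp /vsub /vadd /vscale /=.
by congr (_, _, _); ring.
Qed.

Lemma qtrace_circum_form O A B C : circumcenter_of O A B C ->
  qtrace (circum_form O A B C) = (sqdist O A + sqdist (orthocenter O A B C) O) / 2.
Proof.
move=> [hAB hBC].
have -> : qtrace (circum_form O A B C) =
    (sqdist O B + sqdist O C - sqdist O A + sqdist (orthocenter O A B C) O) / 2.
  by rewrite /qtrace /circum_form /orthocenter /sqdist /dotp /vsub /vadd /vscale /=; field.
by rewrite -hBC -hAB addrK.
Qed.

Lemma qdet_circum_form O A B C : circumcenter_of O A B C ->
  qdet (circum_form O A B C) = orthic_rho O A B C ^+ 2.
Proof.
move=> [hAB hBC].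
set nA := sqdist O A in hAB *; set nB := sqdist O B in hAB hBC *.
set nC := sqdist O C in hBC *.
set dAB := dotp (vsub A O) (vsub B O); set dBC := dotp (vsub B O) (vsub C O).
set dCA := dotp (vsub C O) (vsub A O).
have hH : sqdist (orthocenter O A B C) O = nA + nB + nC + 2 * (dAB + dBC + dCA).
  by rewrite /nA /nB /nC /dAB /dBC /dCA /orthocenter /sqdist /dotp /vsub /vadd /vscale /=; ring.
(* In complex coordinates centred at [O], twice the form is a scalar plus the
   matrix of [xy + yz + zx]; the last bracket is the squared modulus of the latter *)
have hdet : 4 * qdet (circum_form O A B C) =
    ((nB + nC - nA + sqdist (orthocenter O A B C) O) / 2) ^+ 2 -
    (nA * nB + nB * nC + nC * nA + 2 * (nB * dCA + nC * dAB + nA * dBC)).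
  rewrite /nA /nB /nC /dAB /dBC /dCA /qdet /circum_form /orthocenter.
  by rewrite /sqdist /dotp /vsub /vadd /vscale /=; field.
apply: (@mulfI _ 4); first by rewrite pnatr_eq0.
by rewrite hdet /orthic_rho -/nA hH -hBC -hAB; field.
Qed.

Lemma circum_form_inscribed O A B C c s a b :
  circumcenter_of O A B C -> crossp (vsub B A) (vsub C A) != 0 ->
  c ^+ 2 + s ^+ 2 = 1 -> 0 < a -> 0 < b ->
  tangent_line O c s a b B C -> tangent_line O c s a b C A -> tangent_line O c s a b A B ->
  circum_form O A B C = ellipse_form c s a b.
Proof.
move=> hO hk hcs ha hb hBC hCA hAB.
have hO1 := circumcenter_of_rotate hO; have hO2 := circumcenter_of_rotate hO1.
apply: (@qform_eq_triangle _ _ (vsub C B) (vsub A C) (vsub B A)).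
- by rewrite /vadd /vsub /=; congr (_, _); ring.
- by rewrite (_ : crossp _ _ = crossp (vsub B A) (vsub C A)) //; rewrite /crossp /vsub /=; ring.
- by rewrite -(circum_form_side hO) (tangent_line_cross hcs ha hb hBC).
- rewrite -(circum_form_rotate hO) -(circum_form_side hO1).
  by rewrite (tangent_line_cross hcs ha hb hCA).
- rewrite -(circum_form_rotate hO) -(circum_form_rotate hO1) -(circum_form_side hO2).
  by rewrite (tangent_line_cross hcs ha hb hAB).
Qed.

Lemma vsub_translate T X Y : vsub (vsub X T) (vsub Y T) = vsub X Y.
Proof. by rewrite /vsub /=; congr (_, _); ring. Qed.

Lemma sqdist_translate T X Y : sqdist (vsub X T) (vsub Y T) = sqdist X Y.
Proof. by rewrite /sqdist vsub_translate. Qed.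

Lemma foot_translate T X P Q : foot (vsub X T) (vsub P T) (vsub Q T) = vsub (foot X P Q) T.
Proof.
by rewrite /foot /on_line_at !vsub_translate /vsub /vadd /vscale /=; congr (_, _); ring.
Qed.

Lemma orthocenter_translate T O A B C :
  orthocenter (vsub O T) (vsub A T) (vsub B T) (vsub C T) = vsub (orthocenter O A B C) T.
Proof. by rewrite /orthocenter /vsub /vadd /vscale /=; congr (_, _); ring. Qed.

Lemma circumcenter_of_translate T O A B C :
  circumcenter_of (vsub O T) (vsub A T) (vsub B T) (vsub C T) = circumcenter_of O A B C.
Proof. by rewrite /circumcenter_of !sqdist_translate. Qed.

Lemma acute_translate T A B C : acute (vsub A T) (vsub B T) (vsub C T) = acute A B C.
Proof. by rewrite /acute !vsub_translate. Qed.

Lemma orthic_rho_translate T O A B C :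
  orthic_rho (vsub O T) (vsub A T) (vsub B T) (vsub C T) = orthic_rho O A B C.
Proof. by rewrite /orthic_rho orthocenter_translate !sqdist_translate. Qed.

Lemma strictly_inside_translate T X P Q S :
  strictly_inside (vsub X T) (vsub P T) (vsub Q T) (vsub S T) -> strictly_inside X P Q S.
Proof.
move=> [u [v [w [hu [hv [hw [huvw hX]]]]]]]; exists u, v, w; do 4!split => //.
move: hX; rewrite /vsub /vadd /vscale /= => -[hX1 hX2].
have ew : w = 1 - u - v by lra.
case: X hX1 hX2 => X1 X2 /= hX1 hX2; rewrite ew in hX1 hX2 *.
by congr (_, _); [rewrite -[X1](subrK T.1) hX1 | rewrite -[X2](subrK T.2) hX2]; ring.
Qed.

(** * The orthic triangle *)

(* Computations are done with [A] at the origin, where the circumcenter has a closed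
   form; the general statements follow by translation. *)
Lemma circumcenter_origin O P Q : circumcenter_of O (0, 0) P Q -> crossp P Q != 0 ->
  O = ((Q.2 * dotp P P - P.2 * dotp Q Q) / (2 * crossp P Q),
       (P.1 * dotp Q Q - Q.1 * dotp P P) / (2 * crossp P Q)).
Proof.
case: O => o1 o2 [hP hQ] hk.
have sq X : sqdist (o1, o2) (0, 0) - sqdist (o1, o2) X = 2 * (X.1 * o1 + X.2 * o2) - dotp X X.
  by rewrite /sqdist /dotp /vsub /=; ring.
have eP : dotp P P = 2 * (P.1 * o1 + P.2 * o2).
  by apply/eqP; rewrite eq_sym -subr_eq0 -sq hP subrr.
have eQ : dotp Q Q = 2 * (Q.1 * o1 + Q.2 * o2).
  by apply/eqP; rewrite eq_sym -subr_eq0 -sq hP hQ subrr.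
by rewrite eP eQ; move: hk; rewrite /crossp => hk; congr (_, _); field.
Qed.

Lemma orthic_rho_dotp_origin O P Q : circumcenter_of O (0, 0) P Q -> crossp P Q != 0 ->
  dotp P Q * dotp (vsub (0, 0) P) (vsub Q P) * dotp (vsub (0, 0) Q) (vsub P Q) =
  2 * orthic_rho O (0, 0) P Q * crossp P Q ^+ 2.
Proof.
move=> hO hk; rewrite (circumcenter_origin hO hk).
case: P Q hk {hO} => [p1 p2] [q1 q2].
rewrite /orthic_rho /orthocenter /crossp /sqdist /dotp /vsub /vadd /vscale /= => hk.
by field.
Qed.

Lemma orthic_rho_gt0 O A B C :
  acute A B C -> circumcenter_of O A B C -> 0 < orthic_rho O A B C.
Proof.
move=> hac hO; have hk := acute_cross_neq0 hac.
have hO' : circumcenter_of (vsub O A) (0, 0) (vsub B A) (vsub C A).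
  by rewrite -(vsub_self A) circumcenter_of_translate.
have := orthic_rho_dotp_origin hO' hk.
rewrite -(vsub_self A) !vsub_translate orthic_rho_translate.
move: hac => [hA [hB hC]] e.
have hk2 : 0 < crossp (vsub B A) (vsub C A) ^+ 2 by rewrite lt0r sqr_ge0 sqrf_eq0 hk.
by have := mulr_gt0 (mulr_gt0 hA hB) hC; rewrite e (pmulr_lgt0 _ hk2) pmulr_rgt0.
Qed.

Lemma orthocenter_inside_orthic_origin O P Q :
  acute (0, 0) P Q -> circumcenter_of O (0, 0) P Q ->
  strictly_inside (orthocenter O (0, 0) P Q) (foot (0, 0) P Q) (foot P Q (0, 0)) (foot Q (0, 0) P).
Proof.
move=> hac hO; have hk0 := acute_cross_neq0 hac.
have [hP hQP hQ] := sqdist_sides_gt0 hk0.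
have hk : crossp P Q != 0 by move: hk0; rewrite !vsub_origin.
move: hac => [hA [hB hC]].
(* the incenter of the orthic triangle has weights [a cos A : b cos B : c cos C] *)
set wA := sqdist Q P * dotp (vsub P (0, 0)) (vsub Q (0, 0)).
set wB := sqdist (0, 0) Q * dotp (vsub (0, 0) P) (vsub Q P).
set wC := sqdist P (0, 0) * dotp (vsub (0, 0) Q) (vsub P Q).
have hS : 0 < wA + wB + wC by rewrite !addr_gt0 ?mulr_gt0.
exists (wA / (wA + wB + wC)), (wB / (wA + wB + wC)), (wC / (wA + wB + wC)).
do 3!(split; first by apply: divr_gt0 => //; apply: mulr_gt0).
split; first by field; rewrite gt_eqF.
move: hS hP hQP hQ; rewrite !lt0r => /andP[hS _] /andP[hP _] /andP[hQP _] /andP[hQ _].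
rewrite (circumcenter_origin hO hk).
move: hS hP hQP hQ hk; rewrite /wA /wB /wC.
case: P Q {hO hk0 wA wB wC hA hB hC} => [p1 p2] [q1 q2].
rewrite /orthocenter /foot /on_line_at /crossp /sqdist /dotp /vsub /vadd /vscale /=.
rewrite !subr0 !sub0r => hS hP hQP hQ hk.
by congr (_, _); field; rewrite hP hS hQ hQP hk.
Qed.

Lemma orthocenter_inside_orthic O A B C : acute A B C -> circumcenter_of O A B C ->
  strictly_inside (orthocenter O A B C) (foot A B C) (foot B C A) (foot C A B).
Proof.
move=> hac hO; apply: (strictly_inside_translate (T := A)).
rewrite -!foot_translate -orthocenter_translate vsub_self.
apply: orthocenter_inside_orthic_origin.
  by rewrite -(vsub_self A) acute_translate.
by rewrite -(vsub_self A) circumcenter_of_translate.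
Qed.

Lemma orthic_side_dist_origin O P Q : circumcenter_of O (0, 0) P Q -> crossp P Q != 0 ->
  sqdist O (0, 0) * crossp (vsub (foot P Q (0, 0)) (foot (0, 0) P Q))
                           (vsub (orthocenter O (0, 0) P Q) (foot (0, 0) P Q)) ^+ 2 =
  orthic_rho O (0, 0) P Q ^+ 2 * sqdist (foot P Q (0, 0)) (foot (0, 0) P Q).
Proof.
move=> hO hk; rewrite (circumcenter_origin hO hk).
have hk0 : crossp (vsub P (0, 0)) (vsub Q (0, 0)) != 0 by rewrite !vsub_origin.
have [] := sqdist_sides_gt0 hk0; rewrite !lt0r => /andP[hP _] /andP[hQP _] /andP[hQ _].
case: P Q hk hP hQP hQ {hO hk0} => [p1 p2] [q1 q2].
rewrite /orthic_rho /orthocenter /foot /on_line_at /crossp /sqdist /dotp /vsub /vadd /vscale /=.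
rewrite !subr0 !sub0r => hk hP hQP hQ.
by field; rewrite hQP hQ hk.
Qed.

Lemma orthic_side_dist O A B C r :
  circumcenter_of O A B C -> crossp (vsub B A) (vsub C A) != 0 ->
  sqdist O A * r ^+ 2 = orthic_rho O A B C ^+ 2 ->
  dist_line_eq (orthocenter O A B C) (foot A B C) (foot B C A) r.
Proof.
move=> hO hk hr.
have hO' : circumcenter_of (vsub O A) (0, 0) (vsub B A) (vsub C A).
  by rewrite -(vsub_self A) circumcenter_of_translate.
have := orthic_side_dist_origin hO' hk.
rewrite -(vsub_self A) !foot_translate orthocenter_translate !vsub_translate.
rewrite !sqdist_translate orthic_rho_translate -hr /dist_line_eq -mulrA.
by apply: mulfI; apply: circumradius_neq0 hO hk.
Qed.

Lemma is_inradius_orthic O A B C r :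
  acute A B C -> circumcenter_of O A B C -> 0 < r ->
  sqdist O A * r ^+ 2 = orthic_rho O A B C ^+ 2 ->
  is_inradius r (foot A B C) (foot B C A) (foot C A B).
Proof.
move=> hac hO hr hrho; have hk := acute_cross_neq0 hac.
have hO1 := circumcenter_of_rotate hO; have hO2 := circumcenter_of_rotate hO1.
have [hAB hBC] := hO.
split; first exact: hr.
exists (orthocenter O A B C).
split; first exact: (orthocenter_inside_orthic hac hO).
split; first exact: (orthic_side_dist hO hk hrho).
have hk1 : crossp (vsub C B) (vsub A B) != 0 by rewrite crossp_rotate.
have hk2 : crossp (vsub A C) (vsub B C) != 0 by rewrite crossp_rotate.
have hrho1 : sqdist O B * r ^+ 2 = orthic_rho O B C A ^+ 2.
  by rewrite (orthic_rho_rotate hO) -hAB.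
have hrho2 : sqdist O C * r ^+ 2 = orthic_rho O C A B ^+ 2.
  by rewrite (orthic_rho_rotate hO1) (orthic_rho_rotate hO) -hBC -hAB.
have hH1 := orthocenter_rotate O A B C; have hH2 := orthocenter_rotate O B C A.
split; first by rewrite -hH1; exact: (orthic_side_dist hO1 hk1 hrho1).
by rewrite -hH1 -hH2; exact: (orthic_side_dist hO2 hk2 hrho2).
Qed.

End Geometry.

Theorem corollary5p9 (R : rcfType) (A B C O : pt R) (c s a b : R) :
  acute A B C ->
  circumcenter_of O A B C ->
  c ^+ 2 + s ^+ 2 = 1 ->
  0 < b -> b < a ->
  tangent_line O c s a b B C ->
  tangent_line O c s a b C A ->
  tangent_line O c s a b A B ->
  is_inradius (a * b / (a + b)) (foot A B C) (foot B C A) (foot C A B).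
Proof.
move=> hac hO hcs hb hba hBC hCA hAB; have ha := lt_trans hb hba.
have hform := circum_form_inscribed hO (acute_cross_neq0 hac) hcs ha hb hBC hCA hAB.
have htr := qtrace_circum_form hO; rewrite hform (qtrace_ellipse_form _ _ hcs) in htr.
have hdet := qdet_circum_form hO; rewrite hform (qdet_ellipse_form _ _ hcs) -exprMn in hdet.
have hab : a * b = orthic_rho O A B C.
  apply/eqP; rewrite -(@eqrXn2 _ 2) ?hdet //.
    exact: ltW (mulr_gt0 ha hb).
  exact: ltW (orthic_rho_gt0 hac hO).
have hR : (a + b) ^+ 2 = sqdist O A.
  have -> : (a + b) ^+ 2 = a ^+ 2 + b ^+ 2 + 2 * (a * b) by ring.
  by rewrite htr hab /orthic_rho; field.
have hab0 : a + b != 0 by rewrite gt_eqF ?addr_gt0.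
apply: (is_inradius_orthic hac hO); first by rewrite divr_gt0 ?mulr_gt0 ?addr_gt0.
by rewrite -hR -hab; field.
Qed.
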